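(* Let $(X,\Sigma)$ be a measurable space and let $\mathscr{A}=\{\mathsf{A}_t(\cdot|E)\colon E\in\Sigma,\,t\ge0\}$ be a parametric family of conditional aggregation operators (with paving $\Sigma$ for every $t$). If $\inf_{x\in E}f(x)\le\mathsf{A}_t(f|E)$ for every $f\in\mathbf{F}$, every $t>0$ and every $E\in\Sigma\setminus\{\emptyset\}$, then $\mu_t(\{x\in X\colon f(x)\ge t\})\le\boldsymbol{\mu}_{\mathscr{A}}(f,t)$ for every $t>0$, every $f\in\mathbf{F}\setminus\{0_X\}$ and every family $\boldsymbol{\mu}=(\mu_t)_{t\ge0}$ of monotone measures on $\Sigma$.
   Context: $0_X$ is the zero function on $X$. $\Sigma^0=\Sigma\setminus\{\emptyset\}$. $\mathbf{F}$ denotes the set of all $\Sigma$-measurable, nonnegative, bounded functions $f\colon X\to[0,\infty)$. A monotone measure is a map $\mu\colon\Sigma\to[0,\infty]$ with $\mu(B)\le\mu(C)$ whenever $B\subseteq C$, $\mu(\emptyset)=0$ and $\mu(X)>0$. For $E\in\Sigma^0$, a conditional aggregation operator (CAO) w.r.t. $E$ is a map $\mathsf{A}(\cdot|E)\colon\mathbf{F}\to[0,\infty]$ such that (C1) $\mathsf{A}(f|E)\le\mathsf{A}(g|E)$ whenever $f(x)\le g(x)$ for all $x\in E$, and (C2) $\mathsf{A}(\mathbf{1}_{X\setminus E}|E)=0$. Here $\mathsf{A}_t(\cdot|E)$ is a CAO w.r.t. $E$ for each $t\ge0$ and $E\in\Sigma^0$, and $\mathsf{A}_t(\cdot|\emptyset)=\infty$.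 The generalized level measure is $\boldsymbol{\mu}_{\mathscr{A}}(f,t)=\sup\{\mu_t(E)\colon \mathsf{A}_t(f|E)\ge t,\ E\in\Sigma\}$ for $t\ge0$. *)

From HB Require Import structures.
From mathcomp Require Import all_boot all_order all_algebra.
From mathcomp Require Import all_classical all_reals all_analysis.
Set Implicit Arguments. Unset Strict Implicit. Unset Printing Implicit Defensive.
Import Order.TTheory GRing.Theory Num.Theory.
Local Open Scope classical_set_scope.
Local Open Scope ring_scope.
Local Open Scope ereal_scope.

Section Defs.
Context {d : measure_display} {X : measurableType d} {R : realType}.

Definition inF (f : X -> R) : Prop :=
  measurable_fun setT f /\ (forall x, (0 <= f x)%R) /\
  exists M : R, forall x, (f x <= M)%R.

(* monotone measure on Sigma (values outside Sigma are irrelevant) *)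
Definition monotone_measure (mu : set X -> \bar R) : Prop :=
  (forall E, measurable E -> 0 <= mu E) /\
  (forall B C, measurable B -> measurable C -> B `<=` C -> mu B <= mu C) /\
  mu set0 = 0 /\ 0 < mu setT.

Definition is_CAO (A : (X -> R) -> \bar R) (E : set X) : Prop :=
  (forall f, inF f -> 0 <= A f) /\
  (forall f g, inF f -> inF g -> (forall x, E x -> (f x <= g x)%R) ->
     A f <= A g) /\
  A (\1_(~` E)) = 0.

(* parametric family of CAOs: A t f E = A_t(f|E), with A_t(.|emptyset) = oo *)
Definition CAO_family (A : R -> (X -> R) -> set X -> \bar R) : Prop :=
  forall t, (0 <= t)%R ->
    (forall E, measurable E -> E !=set0 -> is_CAO (fun f => A t f E) E) /\
    (forall f, A t f set0 = +oo).

Definition gen_level_measure (mu : R -> set X -> \bar R)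
  (A : R -> (X -> R) -> set X -> \bar R) (f : X -> R) (t : R) : \bar R :=
  ereal_sup [set mu t E | E in [set E | measurable E /\ t%:E <= A t f E]].

End Defs.

From mathcomp Require Import all_boot all_order all_algebra.
From mathcomp Require Import all_classical all_reals all_analysis.
Import Order.TTheory GRing.Theory Num.Theory.
Local Open Scope classical_set_scope.
Local Open Scope ring_scope.
Local Open Scope ereal_scope.

(* The superlevel set {f >= t} is measurable, and A_t(f | {f >= t}) is at
   least the infimum of f over it, hence at least t (and it is +oo when the
   set is empty).  So {f >= t} is itself one of the sets over which the
   supremum defining the generalized level measure is taken. *)

Section superlevel_set.
Context {d : measure_display} {X : measurableType d} {R : realType}.

Definition aggregation_ge_inf (A : R -> (X -> R) -> set X -> \bar R) : Prop :=
  forall (f : X -> R) (t : R) (E : set X), inF f -> (0 < t)%R ->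
    measurable E -> E !=set0 -> ereal_inf [set (f x)%:E | x in E] <= A t f E.

Lemma measurable_superlevel (f : X -> R) (t : R) :
  measurable_fun setT f -> measurable [set x | (t <= f x)%R].
Proof.
move=> mf; rewrite -[X in measurable X]setTI.
exact: measurable_fun_le (measurable_cst t) mf.
Qed.

Lemma ereal_inf_image_ge (f : X -> R) (E : set X) (t : R) :
  (forall x, E x -> t <= f x)%R -> t%:E <= ereal_inf [set (f x)%:E | x in E].
Proof.
by move=> ftE; apply: le_ereal_inf_tmp => _ [x Ex <-]; rewrite lee_fin ftE.
Qed.

Lemma superlevel_aggregation_ge (A : R -> (X -> R) -> set X -> \bar R)
    (f : X -> R) (t : R) :
  aggregation_ge_inf A -> A t f set0 = +oo -> inF f -> (0 < t)%R ->
  t%:E <= A t f [set x | (t <= f x)%R].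
Proof.
move=> Aginf Aset0 Ff t0.
have [->|/set0P ne] := eqVneq [set x | (t <= f x)%R] set0.
  by rewrite Aset0 leey.
apply: le_trans (Aginf f t _ Ff t0 (measurable_superlevel f t Ff.1) ne).
exact: ereal_inf_image_ge.
Qed.

End superlevel_set.

Theorem proposition3p17 (d : measure_display) (X : measurableType d)
  (R : realType) (A : R -> (X -> R) -> set X -> \bar R) :
  CAO_family A ->
  (forall (f : X -> R) (t : R) (E : set X), inF f -> (0 < t)%R ->
     measurable E -> E !=set0 ->
     ereal_inf [set (f x)%:E | x in E] <= A t f E) ->
  forall (mu : R -> set X -> \bar R),
    (forall t, (0 <= t)%R -> monotone_measure (mu t)) ->
    forall (t : R) (f : X -> R), (0 < t)%R -> inF f -> f <> (fun _ => 0%R) ->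
      mu t [set x | (t <= f x)%R] <= gen_level_measure mu A f t.
Proof.
move=> CA Aginf mu _ t f t0 Ff _.
apply: ereal_sup_ubound; exists [set x | (t <= f x)%R] => //; split.
- exact: measurable_superlevel f t Ff.1.
- exact: superlevel_aggregation_ge Aginf ((CA t (ltW t0)).2 f) Ff t0.
Qed.
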